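(* Let $\mathbf{A}\in\mathbb{R}^{3\times 3}$ and let $\mathbf{A}=\mathbf{U}\mathbf{S}\mathbf{V}^T$ be its proper singular value decomposition, with $\mathbf{S}=\operatorname{diag}(s_1,s_2,s_3)$. Let $\mathbf{R}\in\mathrm{SO}(3)$ be a random rotation following the Rotation Laplace distribution $\mathcal{RL}(\mathbf{A})$, i.e. with density with respect to the normalized Haar measure $\mathrm{d}\mathbf{R}$ on $\mathrm{SO}(3)$ $$p(\mathbf{R};\mathbf{A})=\frac{1}{F(\mathbf{A})}\,\frac{\exp\left(-\sqrt{\operatorname{tr}(\mathbf{S}-\mathbf{A}^T\mathbf{R})}\right)}{\sqrt{\operatorname{tr}(\mathbf{S}-\mathbf{A}^T\mathbf{R})}},$$ where $F(\mathbf{A})$ is the normalizing constant. Let $\mathbf{R}_0=\mathbf{U}\mathbf{V}^T$ be the mode of this distribution, set $\widetilde{\mathbf{R}}=\mathbf{R}_0^T\mathbf{R}$, $\boldsymbol{\Phi}=\log\widetilde{\mathbf{R}}\in\mathfrak{so}(3)$ and $\boldsymbol{\phi}=\boldsymbol{\Phi}^\vee\in\mathbb{R}^3$. Then, when $\|\mathbf{R}-\mathbf{R}_0\|\to 0$, $\boldsymbol{\phi}$ follows a zero-mean (three-dimensional) multivariate Laplace distribution; that is, the probability $p(\mathbf{R})\,\mathrm{d}\mathbf{R}$ expressed in the coordinates $\boldsymbol{\phi}$ agrees, up to a factor $1+O(\|\boldsymbol{\phi}\|^2)$ as $\boldsymbol{\phi}\to\mathbf{0}$, with a density proportional to the zero-mean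 multivariate Laplace density $\frac{\exp(-\sqrt{2\boldsymbol{\phi}^T\boldsymbol{\Sigma}^{-1}\boldsymbol{\phi}})}{\sqrt{\boldsymbol{\phi}^T\boldsymbol{\Sigma}^{-1}\boldsymbol{\phi}}}\,\mathrm{d}\boldsymbol{\phi}$ for some covariance matrix $\boldsymbol{\Sigma}$.
   Context: Proper SVD: if $\mathbf{A}=\mathbf{U}'\mathbf{S}'(\mathbf{V}')^T$ is an ordinary SVD with $\mathbf{S}'=\operatorname{diag}(s_1',s_2',s_3')$, set $\mathbf{U}=\mathbf{U}'\operatorname{diag}(1,1,\det\mathbf{U}')$, $\mathbf{V}=\mathbf{V}'\operatorname{diag}(1,1,\det\mathbf{V}')$, $\mathbf{S}=\operatorname{diag}(s_1',s_2',\det(\mathbf{U}'\mathbf{V}')s_3')$, so that $\mathbf{U},\mathbf{V}\in\mathrm{SO}(3)$ and $\mathbf{A}=\mathbf{U}\mathbf{S}\mathbf{V}^T$. The Haar measure $\mathrm{d}\mathbf{R}$ on $\mathrm{SO}(3)$ is normalized so that $\int_{\mathrm{SO}(3)}\mathrm{d}\mathbf{R}=1$. $\mathfrak{so}(3)$ is the space of $3\times3$ skew-symmetric matrices; the vee map $\vee$ sends $\begin{pmatrix}0&-\phi_z&\phi_y\\ \phi_z&0&-\phi_x\\ -\phi_y&\phi_x&0\end{pmatrix}$ to $(\phi_x,\phi_y,\phi_z)^T$, and hat $\wedge$ is its inverse. $\exp(\hat{\boldsymbol\phi})=\mathbf{I}+\frac{\sin\theta}{\theta}\hat{\boldsymbol\phi}+\frac{1-\cos\theta}{\theta^2}\hat{\boldsymbol\phi}^2$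 with $\theta=\|\boldsymbol\phi\|$, and $\log\mathbf{R}=\frac{\theta}{2\sin\theta}(\mathbf{R}-\mathbf{R}^T)$ with $\theta=\arccos\frac{\operatorname{tr}\mathbf{R}-1}{2}$. The zero-mean three-dimensional multivariate Laplace distribution with covariance $\boldsymbol\Sigma$ has density on $\mathbb{R}^3$ proportional to $\exp(-\sqrt{2\mathbf{x}^T\boldsymbol\Sigma^{-1}\mathbf{x}})/\sqrt{\mathbf{x}^T\boldsymbol\Sigma^{-1}\mathbf{x}}$. *)

From HB Require Import structures.
From mathcomp Require Import all_boot all_order all_algebra.
From mathcomp Require Import reals sequences exp trigo.
Set Implicit Arguments. Unset Strict Implicit. Unset Printing Implicit Defensive.
Import Order.TTheory GRing.Theory Num.Theory.
Local Open Scope ring_scope.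

Section Defs.
Variable R : realType.

Definition is_rot (M : 'M[R]_3) : Prop := M^T *m M = 1%:M /\ \det M = 1.

Definition vnorm (x : 'cV[R]_3) : R := Num.sqrt ((x^T *m x) 0 0).

Definition hat (p : 'cV[R]_3) : 'M[R]_3 :=
  \matrix_(i < 3, j < 3)
    (nth [::] [:: [:: 0; - p 2%:R 0; p 1%:R 0];
        [:: p 2%:R 0; 0; - p 0 0];
        [:: - p 1%:R 0; p 0 0; 0]] i)`_j.

Definition vee (M : 'M[R]_3) : 'cV[R]_3 :=
  \col_(i < 3) [:: M 2%:R 1%:R; M 0 2%:R; M 1%:R 0]`_i.

Definition logm (M : 'M[R]_3) : 'M[R]_3 :=
  let theta := acos ((\tr M - 1) / 2) in (theta / (2 * sin theta)) *: (M - M^T).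

Definition rl_kernel (A S M : 'M[R]_3) : R :=
  let t := \tr (S - A^T *m M) in expR (- Num.sqrt t) / Num.sqrt t.

(* Density of the normalized Haar measure dR of SO(3) in exponential coordinates
   R = R0 exp(hat phi), |phi| < pi :  dR = (1 - cos|phi|) / (4 pi^2 |phi|^2) dphi. *)
Definition haar_exp_density (p : 'cV[R]_3) : R :=
  (1 - cos (vnorm p)) / (4 * pi ^+ 2 * vnorm p ^+ 2).

Definition qform (M : 'M[R]_3) (x : 'cV[R]_3) : R := (x^T *m M *m x) 0 0.

Definition laplace_kernel (Sigma : 'M[R]_3) (x : 'cV[R]_3) : R :=
  expR (- Num.sqrt (2 * qform (invmx Sigma) x)) / Num.sqrt (qform (invmx Sigma) x).

Definition spd (M : 'M[R]_3) : Prop :=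
  M^T = M /\ forall x : 'cV[R]_3, x != 0 -> 0 < qform M x.
End Defs.

(* Put M = R0^T R, t = tr M and z = vee (M - M^T).  For a rotation,
   Cayley-Hamilton gives M^2 = t (M - 1) + M^T, hence
   (t + 1) (M + M^T - 2) = (M - M^T)^2 = z z^T - |z|^2,
   so |z|^2 = (t + 1) (3 - t), the rotation angle theta = |phi| has
   cos theta = (t - 1) / 2, and phi = theta z / (2 sin theta).  Conjugating by V,
   with y = V^T z and N = V^T M V = U^T R V, the diagonal entries give
   2 (t + 1) (1 - N_ii) = |y|^2 - y_i^2.  Hence the Rotation Laplace exponent is
   T = sum_i s_i (1 - N_ii) = Y / (4 (1 + cos theta)) with
   Y = (s2 + s3) y1^2 + (s1 + s3) y2^2 + (s1 + s2) y3^2, while for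
   Sigma = V diag (4 / (s2 + s3), 4 / (s1 + s3), 4 / (s1 + s2)) V^T the Laplace
   exponent is phi^T Sigma^-1 phi = theta^2 Y / (16 sin^2 theta).  The two
   exponents and the Haar density (1 - cos theta) / (4 pi^2 theta^2) are thus all
   governed by g = 2 (1 - cos theta) / theta^2 = 1 + O(theta^2): the ratio of
   the two densities is sqrt g * exp (sqrt T (1 / sqrt g - 1)), which is within
   theta^2 of 1. *)

From HB Require Import structures.
From mathcomp Require Import all_boot all_order all_algebra.
From mathcomp Require Import reals sequences exp trigo.
From mathcomp Require Import ring lra.
From mathcomp Require Import classical_sets topology normedtype derive.
Import Order.TTheory GRing.Theory Num.Theory numFieldNormedType.Exports.
Set Implicit Arguments.
Unset Strict Implicit.
Unset Printing Implicit Defensive.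

Local Open Scope ring_scope.
Local Open Scope classical_set_scope.

Section TrigBounds.
Variable R : realType.
Implicit Types x y : R.

Lemma ger0_is_derive_ndecr0 {f df : R -> R} :
  (forall x, is_derive x (1 : R) f (df x)) -> (forall x, 0 <= x -> 0 <= df x) ->
  forall x, 0 <= x -> f 0 <= f x.
Proof.
move=> f_df df_ge0 x x_ge0.
have f_cont : {within `[0, x], continuous f}.
  by apply: derivable_within_continuous => y _; have [] := f_df y.
have [c c_in] := MVT_segment x_ge0 (fun y _ => f_df y) f_cont.
move/eqP; rewrite subr_eq => /eqP ->.
rewrite lerDr mulr_ge0 ?subr_ge0 ?df_ge0 //.
by move: c_in; rewrite in_itv /= => /andP[].
Qed.

Lemma sin_le_id x : 0 <= x -> sin x <= x.
Proof.
move=> x_ge0.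
have f_df y : is_derive y (1 : R) (fun y => y - sin y) (1 - cos y).
  exact: is_deriveB.
have df_ge0 y : 0 <= y -> 0 <= 1 - cos y by rewrite subr_ge0 cos_le1.
by have := ger0_is_derive_ndecr0 f_df df_ge0 x_ge0; rewrite /= sin0 subrr subr_ge0.
Qed.

Lemma cos_ge_taylor2 x : 0 <= x -> 1 - x ^+ 2 / 2 <= cos x.
Proof.
move=> x_ge0.
have f_df y : is_derive y (1 : R) (fun y => cos y + y ^+ 2 / 2) (y - sin y).
  by apply: is_derive_eq; rewrite /GRing.scale /=; lra.
have df_ge0 y : 0 <= y -> 0 <= y - sin y by move=> ?; rewrite subr_ge0 sin_le_id.
by have := ger0_is_derive_ndecr0 f_df df_ge0 x_ge0; rewrite /= cos0; lra.
Qed.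

Lemma sin_ge_taylor3 x : 0 <= x -> x - x ^+ 3 / 6 <= sin x.
Proof.
move=> x_ge0.
have f_df y : is_derive y (1 : R) (fun y => sin y - y + y ^+ 3 / 6)
                                  (cos y - 1 + y ^+ 2 / 2).
  by apply: is_derive_eq; rewrite /GRing.scale /=; field.
have df_ge0 y : 0 <= y -> 0 <= cos y - 1 + y ^+ 2 / 2.
  by move=> /cos_ge_taylor2; lra.
by have := ger0_is_derive_ndecr0 f_df df_ge0 x_ge0; rewrite /= sin0; lra.
Qed.

Lemma cos_le_taylor4 x : 0 <= x -> cos x <= 1 - x ^+ 2 / 2 + x ^+ 4 / 24.
Proof.
move=> x_ge0.
have f_df y : is_derive y (1 : R) (fun y => y ^+ 4 / 24 - y ^+ 2 / 2 - cos y)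
                                  (sin y - y + y ^+ 3 / 6).
  by apply: is_derive_eq; rewrite /GRing.scale /=; field.
have df_ge0 y : 0 <= y -> 0 <= sin y - y + y ^+ 3 / 6.
  by move=> /sin_ge_taylor3; lra.
by have := ger0_is_derive_ndecr0 f_df df_ge0 x_ge0; rewrite /= cos0; lra.
Qed.

Lemma one_sub_cos_div_sqr_bounds x : 0 < x ->
  1 - x ^+ 2 / 12 <= 2 * (1 - cos x) / x ^+ 2 <= 1.
Proof.
move=> x_gt0; have x2_gt0 : 0 < x ^+ 2 by rewrite exprn_gt0.
have := cos_ge_taylor2 (ltW x_gt0); have := cos_le_taylor4 (ltW x_gt0).
rewrite (_ : x ^+ 4 = x ^+ 2 * x ^+ 2) -?exprD // => cos_le cos_ge.
by rewrite ler_pdivlMr // ler_pdivrMr //; apply/andP; split; nra.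
Qed.

End TrigBounds.

Lemma expR_le1D2x (R : realType) (x : R) : 0 <= x <= 1 / 2 -> expR x <= 1 + 2 * x.
Proof.
move=> /andP[x_ge0 x_le]; have := expR_ge1Dx (- x).
have : expR x * expR (- x) = 1 by rewrite -expRD subrr expR0.
by have := expR_gt0 x; nra.
Qed.

Section DensityRatio.
Variable R : realType.

Lemma mul_expR_near1 (a b e : R) : 0 < a <= 1 -> 0 < b <= 1 ->
  1 - e / 12 <= b ^+ 2 -> 0 <= e < 1 -> `|b * expR (a / b - a) - 1| <= e.
Proof.
move=> /andP[a_gt0 a_le1] /andP[b_gt0 b_le1] b2_ge /andP[e_ge0 e_lt1].
have b_ge : 1 - e / 12 <= b by nra.
set X := a / b - a.
have XbE : X * b = a * (1 - b) by rewrite /X; field; rewrite gt_eqF.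
have X_ge0 : 0 <= X by nra.
have X_le : X <= e / 11 by nra.
have expX_ge1 := expR_ge1Dx X.
have expX_le : expR X <= 1 + 2 * X by apply: expR_le1D2x; apply/andP; split; lra.
by rewrite ler_norml; apply/andP; split; nra.
Qed.

Lemma rl_laplace_factor (F th T P g : R) :
  0 < F -> 0 < th -> 0 < T -> cos th < 1 -> 4 * (1 - cos th) * P = th ^+ 2 * T ->
  g = 2 * (1 - cos th) / th ^+ 2 ->
  expR (- Num.sqrt T) / Num.sqrt T / F * ((1 - cos th) / (4 * pi ^+ 2 * th ^+ 2))
  = (8 * pi ^+ 2 * F * Num.sqrt 2)^-1 * (expR (- Num.sqrt (2 * P)) / Num.sqrt P)
    * (Num.sqrt g * expR (Num.sqrt T / Num.sqrt g - Num.sqrt T)).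
Proof.
(* [pi] is generalized so that [field] does not unfold its definition. *)
move=> F_gt0 th_gt0 T_gt0 cos_lt1 PE gE; have := pi_gt0 R; move: (pi : R) => p p_gt0.
have g_gt0 : 0 < g by rewrite gE divr_gt0 ?exprn_gt0 // mulr_gt0 // subr_gt0.
have {}PE : P = T / (2 * g).
  have four_cos_gt0 : 0 < 4 * (1 - cos th) by rewrite mulr_gt0 // subr_gt0.
  apply: (mulfI (lt0r_neq0 four_cos_gt0)).
  by rewrite mulrA PE gE; field; rewrite !gt_eqF // subr_gt0.
have sqrt2P : Num.sqrt (2 * P) = Num.sqrt T / Num.sqrt g.
  rewrite PE (_ : 2 * _ = T * g^-1); last by field; rewrite gt_eqF.
  by rewrite sqrtrM ?sqrtrV // ltW.
have sqrtP : Num.sqrt P = Num.sqrt T / (Num.sqrt 2 * Num.sqrt g).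
  have g2_ge0 : 0 <= 2 * g by rewrite mulr_ge0 // ltW.
  by rewrite PE sqrtrM ?sqrtrV ?sqrtrM // ltW.
have haarE : (1 - cos th) / (4 * p ^+ 2 * th ^+ 2) = g / (8 * p ^+ 2).
  by rewrite gE; field; rewrite !gt_eqF.
have expE : expR (- Num.sqrt T)
    = expR (- (Num.sqrt T / Num.sqrt g)) * expR (Num.sqrt T / Num.sqrt g - Num.sqrt T).
  by rewrite -expRD addKr.
rewrite haarE sqrt2P sqrtP expE -[X in X / (8 * _)](sqr_sqrtr (ltW g_gt0)).
have a_gt0 : 0 < Num.sqrt T by rewrite sqrtr_gt0.
have b_gt0 : 0 < Num.sqrt g by rewrite sqrtr_gt0.
have q_gt0 : 0 < Num.sqrt 2 :> R by rewrite sqrtr_gt0.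
by field; rewrite !gt_eqF.
Qed.

Lemma rl_haar_laplace_ratio (F th T P : R) :
  0 < F -> 0 < th < 1 -> 0 < T <= 1 -> 4 * (1 - cos th) * P = th ^+ 2 * T ->
  let c := (8 * pi ^+ 2 * F * Num.sqrt 2)^-1 in
  `| expR (- Num.sqrt T) / Num.sqrt T / F * ((1 - cos th) / (4 * pi ^+ 2 * th ^+ 2))
     - c * (expR (- Num.sqrt (2 * P)) / Num.sqrt P) |
  <= th ^+ 2 * (c * (expR (- Num.sqrt (2 * P)) / Num.sqrt P)).
Proof.
move=> F_gt0 /andP[th_gt0 th_lt1] /andP[T_gt0 T_le1] PE /=.
have /andP[] := one_sub_cos_div_sqr_bounds th_gt0.
move gE : (2 * (1 - cos th) / th ^+ 2) => g g_ge g_le1.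
have th2_lt1 : th ^+ 2 < 1 by rewrite expr_lt1 ?ltW.
have cos_lt1 : cos th < 1.
  by move: g_ge; rewrite -gE ler_pdivlMr ?exprn_gt0 //; nra.
have P_gt0 : 0 < P.
  have : 0 < th ^+ 2 * T by rewrite mulr_gt0 ?exprn_gt0.
  by rewrite -PE pmulr_rgt0 // mulr_gt0 // subr_gt0.
rewrite (rl_laplace_factor F_gt0 th_gt0 T_gt0 cos_lt1 PE (esym gE)).
set L := _ * (_ / _); have L_gt0 : 0 < L.
  by rewrite mulr_gt0 ?invr_gt0 ?divr_gt0 ?mulr_gt0 ?expR_gt0 ?exprn_gt0 ?pi_gt0 ?sqrtr_gt0.
rewrite -[X in `|_ - X|]mulr1 -mulrBr normrM gtr0_norm // mulrC ler_pM2r //.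
have g_gt0 : 0 < g by lra.
have a_itv : 0 < Num.sqrt T <= 1 by rewrite sqrtr_gt0 T_gt0 -sqrtr1 ler_sqrt.
have b_itv : 0 < Num.sqrt g <= 1 by rewrite sqrtr_gt0 g_gt0 -sqrtr1 ler_sqrt.
by apply: mul_expR_near1; rewrite ?sqr_sqrtr ?sqr_ge0 ?th2_lt1 // ltW.
Qed.

End DensityRatio.

Section Matrix3.
Variable R : comNzRingType.

Definition mx3 (a b c d e f g h i : R) : 'M[R]_3 :=
  \matrix_(p < 3, q < 3) nth 0 (nth [::] [:: [:: a; b; c]; [:: d; e; f]; [:: g; h; i]] p) q.

Lemma mx3E (M : 'M[R]_3) :
  M = mx3 (M 0 0) (M 0 1) (M 0 2%:R) (M 1 0) (M 1 1) (M 1 2%:R)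
          (M 2%:R 0) (M 2%:R 1) (M 2%:R 2%:R).
Proof.
apply/matrixP => i j; rewrite mxE.
by case: i => [[|[|[|?]]] ?]; case: j => [[|[|[|?]]] ?] //=; congr (M _ _); apply: val_inj.
Qed.

Lemma adj_mx3 (a b c d e f g h i : R) :
  \adj (mx3 a b c d e f g h i) =
  mx3 (e * i - f * h) (c * h - b * i) (b * f - c * e)
      (f * g - d * i) (a * i - c * g) (c * d - a * f)
      (d * h - e * g) (b * g - a * h) (a * e - b * d).
Proof.
apply/matrixP => p q; rewrite !mxE /cofactor.
case: p => [[|[|[|?]]] ?] //; case: q => [[|[|[|?]]] ?] //=;
by rewrite (expand_det_row _ 0) !big_ord_recr big_ord0 /= /cofactor !det_mx11 !mxE /=;
   ring.
Qed.

(* Cayley-Hamilton in dimension 3, with [det M * M^-1] written as [adj M]. *)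
Lemma mx3_sqr_adj (M : 'M[R]_3) :
  M *m M = \tr M *: M - \tr (\adj M) *: 1%:M + \adj M.
Proof.
rewrite [M]mx3E adj_mx3; apply/matrixP => p q.
rewrite /mxtrace !mxE !big_ord_recr !big_ord0 /= !mxE /=.
by case: p => [[|[|[|?]]] ?] //; case: q => [[|[|[|?]]] ?] //=; ring.
Qed.

Definition col3 (a b c : R) : 'cV[R]_3 := \col_(p < 3) [:: a; b; c]`_p.

Lemma col3E (y : 'cV[R]_3) : y = col3 (y 0 0) (y 1 0) (y 2%:R 0).
Proof.
apply/matrixP => i j; rewrite mxE.
by case: i => [[|[|[|?]]] ?]; case: j => [[|?] ?] //=; congr (y _ _); apply: val_inj.
Qed.

Lemma mxtrace3 (N : 'M[R]_3) : \tr N = N 0 0 + N 1 1 + N 2%:R 2%:R.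
Proof. by rewrite [N]mx3E /mxtrace !big_ord_recr big_ord0 /= !mxE /= add0r. Qed.

Lemma dotmx3 (y : 'cV[R]_3) :
  (y^T *m y) 0 0 = y 0 0 ^+ 2 + y 1 0 ^+ 2 + y 2%:R 0 ^+ 2.
Proof. by rewrite [y]col3E !mxE !big_ord_recr big_ord0 /= !mxE /= add0r !expr2. Qed.

Lemma qform_diag3 (a b c : R) (y : 'cV[R]_3) :
  (y^T *m diag_mx (\row_i [:: a; b; c]`_i) *m y) 0 0
  = a * y 0 0 ^+ 2 + b * y 1 0 ^+ 2 + c * y 2%:R 0 ^+ 2.
Proof.
rewrite [y]col3E !mxE; do 3 rewrite ?big_ord_recr ?big_ord0 /= ?mxE /=.
by ring.
Qed.

Lemma mxtrace_diag3_mul (a b c : R) (N : 'M[R]_3) :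
  \tr (diag_mx (\row_i [:: a; b; c]`_i) *m N) = a * N 0 0 + b * N 1 1 + c * N 2%:R 2%:R.
Proof. by rewrite mxtrace3 mul_diag_mx !mxE. Qed.

End Matrix3.

Section Rotations.
Variable R : realType.
Implicit Types (M V : 'M[R]_3) (p : 'cV[R]_3).

Lemma rot_mulmxT M : is_rot M -> M *m M^T = 1%:M.
Proof. by case=> /mulmx1C. Qed.

Lemma is_rotT M : is_rot M -> is_rot M^T.
Proof. by move=> rotM; split; [rewrite trmxK rot_mulmxT | rewrite det_tr; case: rotM]. Qed.

Lemma is_rotM (M1 M2 : 'M[R]_3) : is_rot M1 -> is_rot M2 -> is_rot (M1 *m M2).
Proof.
move=> [M1TM1 detM1] [M2TM2 detM2]; split; last by rewrite det_mulmx detM1 detM2 mulr1.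
by rewrite trmx_mul mulmxA -(mulmxA _ M1^T) M1TM1 mulmx1.
Qed.

Lemma rot_adj M : is_rot M -> \adj M = M^T.
Proof.
move=> [MTM detM].
by rewrite -[\adj M]mul1mx -MTM -mulmxA mul_mx_adj detM mulmx1.
Qed.

Lemma rot_sqr M : is_rot M -> M *m M = \tr M *: (M - 1%:M) + M^T.
Proof. by move=> rotM; rewrite mx3_sqr_adj rot_adj // mxtrace_tr scalerBr. Qed.

Lemma rot_skew_sqr M : is_rot M ->
  (M - M^T) *m (M - M^T) = (\tr M + 1) *: (M + M^T - 2%:M).
Proof.
move=> rotM; have [MTM _] := rotM.
rewrite mulmxBl !mulmxBr -trmx_mul rot_sqr // MTM rot_mulmxT //.
by apply/matrixP => i j; rewrite !mxE [j == i]eq_sym -mulr_natr; ring.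
Qed.

Lemma hat_vee_skew M : hat (vee (M - M^T)) = M - M^T.
Proof.
rewrite [M]mx3E; apply/matrixP => i j; rewrite !mxE.
by case: i => [[|[|[|?]]] ?] //; case: j => [[|[|[|?]]] ?] //=; ring.
Qed.

Lemma hat_sqr p : hat p *m hat p = p *m p^T - (p^T *m p) 0 0 *: 1%:M.
Proof.
rewrite [p]col3E; apply/matrixP => i j; rewrite !mxE.
do 3 rewrite ?big_ord_recr ?big_ord0 /= ?mxE /=.
by case: i => [[|[|[|?]]] ?] //; case: j => [[|[|[|?]]] ?] //=; ring.
Qed.

Lemma veeZ (k : R) M : vee (k *: M) = k *: vee M.
Proof. by apply/matrixP => i j; rewrite !mxE; case: i => [[|[|[|?]]] ?]. Qed.

Lemma rot_vee_outer M : is_rot M ->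
  (\tr M + 1) *: (M + M^T - 2%:M)
  = vee (M - M^T) *m (vee (M - M^T))^T
    - ((vee (M - M^T))^T *m vee (M - M^T)) 0 0 *: 1%:M.
Proof. by move=> rotM; rewrite -rot_skew_sqr // -hat_sqr hat_vee_skew. Qed.

Section Conjugation.
Variables M V : 'M[R]_3.
Hypotheses (rotM : is_rot M) (orthoV : V^T *m V = 1%:M).
Let N := V^T *m M *m V.
Let y := V^T *m vee (M - M^T).

Lemma conj_rot_vee_outer :
  (\tr M + 1) *: (N + N^T - 2%:M) = y *m y^T - (y^T *m y) 0 0 *: 1%:M.
Proof.
have VVT : V *m V^T = 1%:M by apply: mulmx1C.
have yy : (y^T *m y) 0 0 = ((vee (M - M^T))^T *m vee (M - M^T)) 0 0.
  by rewrite /y trmx_mul trmxK mulmxA -(mulmxA _ V) VVT mulmx1.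
set z := vee (M - M^T) in yy *.
rewrite yy.
have -> : N + N^T - 2%:M = V^T *m (M + M^T - 2%:M) *m V.
  rewrite /N !trmx_mul trmxK mulmxBr mulmxBl mulmxDr mulmxDl !mulmxA.
  by rewrite mul_mx_scalar -scalemxAl orthoV scalemx1.
have -> : y *m y^T - (z^T *m z) 0 0 *: 1%:M = V^T *m (z *m z^T - (z^T *m z) 0 0 *: 1%:M) *m V.
  by rewrite mulmxBr mulmxBl /y trmx_mul trmxK !mulmxA -scalemxAr mulmx1 -scalemxAl orthoV.
by rewrite -rot_vee_outer // -scalemxAr scalemxAl.
Qed.

Lemma conj_rot_deficit i :
  2 * (\tr M + 1) * (1 - N i i) = (y^T *m y) 0 0 - y i 0 ^+ 2.
Proof.
have /matrixP/(_ i i) := conj_rot_vee_outer.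
move: (N) (y) => N' y'; rewrite !mxE big_ord1 !mxE eqxx mulr1 -expr2.
by rewrite (_ : ord0 = 0) // mulr1n => diagE; rewrite -[RHS]opprB -diagE; ring.
Qed.

Lemma conj_rot_norm : (y^T *m y) 0 0 = (\tr M + 1) * (3 - \tr M).
Proof.
have trN : \tr N = \tr M.
  by rewrite /N mxtrace_mulC mulmxA (mulmx1C orthoV) mul1mx.
have := conj_rot_deficit 0; have := conj_rot_deficit 1; have := conj_rot_deficit 2%:R.
by move: trN; rewrite mxtrace3 dotmx3; nra.
Qed.

End Conjugation.

End Rotations.

Section RotationAngle.
Variable R : realType.

Lemma vnormZ (k : R) (p : 'cV[R]_3) : vnorm (k *: p) = `|k| * vnorm p.
Proof.
rewrite /vnorm linearZ /= [(k *: p)^T]linearZ /= -scalemxAl !mxE mulrA -expr2.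
by rewrite sqrtrM ?sqr_ge0 // sqrtr_sqr.
Qed.

Lemma rot_vee_norm2 (M : 'M[R]_3) : is_rot M ->
  ((vee (M - M^T))^T *m vee (M - M^T)) 0 0 = (\tr M + 1) * (3 - \tr M).
Proof.
move=> rotM; have := conj_rot_norm rotM (_ : (1%:M)^T *m 1%:M = 1%:M).
by rewrite trmx1 !mul1mx; apply.
Qed.

(* [logm] divides by [sin theta]; at [theta = 0] and [theta = pi] this is a
   division by zero, which returns [0], so [vee (logm M)] vanishes there. *)
Lemma rot_angle (M : 'M[R]_3) : is_rot M -> 0 < vnorm (vee (logm M)) ->
  let th := vnorm (vee (logm M)) in
  [/\ cos th = (\tr M - 1) / 2, 0 < sin th
    & vee (logm M) = (th / (2 * sin th)) *: vee (M - M^T)].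
Proof.
move=> rotM phi_gt0 /=.
have := rot_vee_norm2 rotM.
set z := vee (M - M^T); set t := \tr M; set c := (t - 1) / 2 => zz.
have c_itv : -1 <= c <= 1.
  by have := sqr_ge0 (z 0 0); have := sqr_ge0 (z 1 0); have := sqr_ge0 (z 2%:R 0);
     move: zz; rewrite dotmx3 /c; nra.
have sinE : sin (acos c) = Num.sqrt (1 - c ^+ 2) by rewrite sin_acos.
have zE : vnorm z = 2 * sin (acos c).
  rewrite /vnorm zz sinE (_ : (t + 1) * (3 - t) = 2 ^+ 2 * (1 - c ^+ 2)); last first.
    by rewrite /c; field.
  by rewrite sqrtrM ?sqr_ge0 // sqrtr_sqr ger0_norm.
have logE : vee (logm M) = (acos c / (2 * sin (acos c))) *: z by rewrite /logm veeZ.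
have sin_gt0 : 0 < sin (acos c).
  rewrite lt_def sinE sqrtr_ge0 andbT; apply: contraTneq phi_gt0 => sin0.
  by rewrite logE sinE sin0 mulr0 invr0 mulr0 scale0r /vnorm trmx0 mul0mx mxE sqrtr0 ltxx.
have thE : vnorm (vee (logm M)) = acos c.
  have sin2_gt0 : 0 < 2 * sin (acos c) by rewrite mulr_gt0.
  rewrite logE vnormZ zE ger0_norm ?divfK ?gt_eqF //.
  exact: divr_ge0 (acos_ge0 c_itv) (ltW sin2_gt0).
by rewrite thE; split => //; rewrite acosK // in_itv.
Qed.

End RotationAngle.

Section LaplaceCovariance.
Variable R : realType.

Lemma wsum_sqr3_gt0 (a b c : R) (y : 'cV[R]_3) : 0 < a -> 0 < b -> 0 < c -> y != 0 ->
  0 < a * y 0 0 ^+ 2 + b * y 1 0 ^+ 2 + c * y 2%:R 0 ^+ 2.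
Proof.
move=> a_gt0 b_gt0 c_gt0; rewrite [y]col3E !mxE /=.
have := sqr_ge0 (y 0 0); have := sqr_ge0 (y 1 0); have := sqr_ge0 (y 2%:R 0).
rewrite !le0r !sqrf_eq0.
move=> /orP[/eqP-> | ?] /orP[/eqP-> | ?] /orP[/eqP-> | ?]; try by move=> _; nra.
rewrite (_ : col3 0 0 0 = 0) ?eqxx //.
by apply/matrixP => i j; rewrite !mxE; case: i => [[|[|[|?]]] ?] //=; rewrite nth_nil.
Qed.

Lemma qform_conj (V D : 'M[R]_3) (x : 'cV[R]_3) :
  qform (V *m D *m V^T) x = qform D (V^T *m x).
Proof. by rewrite /qform trmx_mul trmxK !mulmxA. Qed.

Lemma qformZ (D : 'M[R]_3) (k : R) (x : 'cV[R]_3) : qform D (k *: x) = k ^+ 2 * qform D x.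
Proof.
by rewrite /qform linearZ /= [(k *: x)^T]linearZ /= -!scalemxAl !mxE mulrA -expr2.
Qed.

Lemma spd_conj_diag3 (V : 'M[R]_3) (a b c : R) :
  V^T *m V = 1%:M -> 0 < a -> 0 < b -> 0 < c ->
  spd (V *m diag_mx (\row_i [:: a; b; c]`_i) *m V^T).
Proof.
move=> orthoV a_gt0 b_gt0 c_gt0; split; first by rewrite !trmx_mul trmxK tr_diag_mx mulmxA.
move=> x x_neq0; rewrite qform_conj /qform qform_diag3 wsum_sqr3_gt0 //.
apply: contra x_neq0 => /eqP Vx0.
by rewrite -[x]mul1mx -(mulmx1C orthoV) -mulmxA Vx0 mulmx0.
Qed.

Lemma invmx_conj_diag n (V : 'M[R]_n) (d e : 'rV[R]_n) :
  V^T *m V = 1%:M -> (forall i, d 0 i * e 0 i = 1) ->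
  invmx (V *m diag_mx d *m V^T) = V *m diag_mx e *m V^T.
Proof.
move=> orthoV de1.
have inv : (V *m diag_mx d *m V^T) *m (V *m diag_mx e *m V^T) = 1%:M.
  rewrite -!mulmxA (mulmxA V^T) orthoV mul1mx (mulmxA (diag_mx d)).
  have -> : diag_mx d *m diag_mx e = 1%:M.
    by rewrite mulmx_diag -diag_const_mx; congr diag_mx; apply/rowP => j; rewrite !mxE.
  by rewrite mul1mx mulmx1C.
have [unitS _] := mulmx1_unit inv.
by rewrite -[invmx _]mulmx1 -inv (mulmxA (invmx _)) mulVmx // mul1mx.
Qed.

End LaplaceCovariance.

Lemma wsum_sqr3_bounds (R : realType) (s1 s2 s3 y0 y1 y2 : R) :
  s2 <= s1 -> `|s3| <= s2 ->
  (s2 + s3) * (y0 ^+ 2 + y1 ^+ 2 + y2 ^+ 2)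
  <= (s2 + s3) * y0 ^+ 2 + (s1 + s3) * y1 ^+ 2 + (s1 + s2) * y2 ^+ 2
  <= (s1 + s2) * (y0 ^+ 2 + y1 ^+ 2 + y2 ^+ 2).
Proof.
move=> s21 /ler_normlP[s3_ge s3_le].
have [s12 s13 s23] : [/\ 0 <= s1 - s2, 0 <= s1 - s3 & 0 <= s2 - s3] by split; lra.
have := mulr_ge0 s12 (sqr_ge0 y1); have := mulr_ge0 s13 (sqr_ge0 y2).
have := mulr_ge0 s13 (sqr_ge0 y0); have := mulr_ge0 s23 (sqr_ge0 y1).
by move=> *; apply/andP; split; lra.
Qed.

Lemma rl_exponents (R : realType) (s1 s2 s3 th t n0 n1 n2 y0 y1 y2 r : R) :
  s2 <= s1 -> `|s3| <= s2 -> 0 < s2 + s3 ->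
  0 < th -> th < (1 + (s1 + s2))^-1 -> 0 < sin th -> cos th = (t - 1) / 2 ->
  r = y0 ^+ 2 + y1 ^+ 2 + y2 ^+ 2 -> r = (t + 1) * (3 - t) ->
  2 * (t + 1) * (1 - n0) = r - y0 ^+ 2 ->
  2 * (t + 1) * (1 - n1) = r - y1 ^+ 2 ->
  2 * (t + 1) * (1 - n2) = r - y2 ^+ 2 ->
  let T := s1 * (1 - n0) + s2 * (1 - n1) + s3 * (1 - n2) in
  0 < T <= 1 /\
  4 * (1 - cos th) * ((th / (2 * sin th)) ^+ 2 *
     ((s2 + s3) / 4 * y0 ^+ 2 + (s1 + s3) / 4 * y1 ^+ 2 + (s1 + s2) / 4 * y2 ^+ 2))
  = th ^+ 2 * T.
Proof.
move=> s21 s32 s23_gt0 th_gt0 th_lt sin_gt0 cosE -> Y2E w0E w1E w2E T.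
have s2_ge0 : 0 <= s2 := le_trans (normr_ge0 s3) s32.
have {}th_lt : th * (1 + (s1 + s2)) < 1 by rewrite -ltr_pdivlMr ?div1r //; lra.
have /andP[Y_ge Y_le] := wsum_sqr3_bounds y0 y1 y2 s21 s32.
set Y := (s2 + s3) * y0 ^+ 2 + (s1 + s3) * y1 ^+ 2 + (s1 + s2) * y2 ^+ 2 in Y_ge Y_le *.
have sin2E : sin th ^+ 2 = 1 - cos th ^+ 2 by rewrite sin2cos2.
have [cos_gtN1 cos_lt1] : -1 < cos th /\ cos th < 1 by split; nra.
have tE : t + 1 = 2 * (1 + cos th) by rewrite cosE; field.
have TE : 4 * (1 + cos th) * T = Y.
  move: (congr1 ( *%R s1) w0E) (congr1 ( *%R s2) w1E) (congr1 ( *%R s3) w2E).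
  by rewrite /T /Y tE; lra.
have {}Y2E : y0 ^+ 2 + y1 ^+ 2 + y2 ^+ 2 = 4 * (1 + cos th) * (1 - cos th).
  by rewrite Y2E cosE; field.
rewrite {}Y2E in Y_ge Y_le.
have C_gt0 : 0 < 4 * (1 + cos th) by lra.
have T_ge : (s2 + s3) * (1 - cos th) <= T by rewrite -(ler_pM2l C_gt0) TE; lra.
have T_le : T <= (s1 + s2) * (1 - cos th) by rewrite -(ler_pM2l C_gt0) TE; lra.
have cos_ge := cos_ge_taylor2 (ltW th_gt0).
have th_small : 0 < th * (1 - th * (1 + (s1 + s2))) by rewrite mulr_gt0 // subr_gt0.
split; first (apply/andP; split).
- by apply: lt_le_trans T_ge; rewrite mulr_gt0 // subr_gt0.
- by nra.
have -> : (s2 + s3) / 4 * y0 ^+ 2 + (s1 + s3) / 4 * y1 ^+ 2 + (s1 + s2) / 4 * y2 ^+ 2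
          = Y / 4 by rewrite /Y; field.
rewrite -TE expr_div_n exprMn sin2E; field.
by rewrite -sin2E gt_eqF // exprn_gt0.
Qed.

Section RotationLaplace.
Variables (R : realType) (s1 s2 s3 : R) (V : 'M[R]_3).
Hypothesis orthoV : V^T *m V = 1%:M.

Definition rl_cov : 'M[R]_3 :=
  V *m diag_mx (\row_i [:: 4 / (s2 + s3); 4 / (s1 + s3); 4 / (s1 + s2)]`_i) *m V^T.

Lemma mxtrace_rl_exponent (U Rm : 'M[R]_3) :
  let S := diag_mx (\row_i [:: s1; s2; s3]`_i) in
  let N := V^T *m ((U *m V^T)^T *m Rm) *m V in
  \tr (S - (U *m S *m V^T)^T *m Rm)
  = s1 * (1 - N 0 0) + s2 * (1 - N 1 1) + s3 * (1 - N 2%:R 2%:R).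
Proof.
move=> S N; have NE : N = U^T *m Rm *m V by rewrite /N trmx_mul trmxK !mulmxA orthoV mul1mx.
rewrite linearB /= !trmx_mul trmxK tr_diag_mx -/S -mulmxA mxtrace_mulC.
rewrite -!mulmxA (mulmxA U^T) -NE mxtrace_diag3_mul mxtrace3 !mxE /=.
by ring.
Qed.

Hypotheses (s23_gt0 : 0 < s2 + s3) (s13_gt0 : 0 < s1 + s3) (s12_gt0 : 0 < s1 + s2).

Lemma spd_rl_cov : spd rl_cov.
Proof. by apply: spd_conj_diag3; rewrite ?divr_gt0. Qed.

Lemma qform_invmx_rl_cov (k : R) (z : 'cV[R]_3) :
  let y := V^T *m z in
  qform (invmx rl_cov) (k *: z)
  = k ^+ 2 * ((s2 + s3) / 4 * y 0 0 ^+ 2 + (s1 + s3) / 4 * y 1 0 ^+ 2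
              + (s1 + s2) / 4 * y 2%:R 0 ^+ 2).
Proof.
pose e := \row_i [:: (s2 + s3) / 4; (s1 + s3) / 4; (s1 + s2) / 4]`_i : 'rV[R]_3.
rewrite /rl_cov (@invmx_conj_diag _ _ _ _ e) //.
  by rewrite qformZ qform_conj /qform qform_diag3.
by move=> i; rewrite !mxE; case: i => [[|[|[|?]]] ?] //=; field; rewrite gt_eqF.
Qed.

End RotationLaplace.

Theorem proposition2 (R : realType) (A U V : 'M[R]_3) (s1 s2 s3 F : R) :
  is_rot U -> is_rot V ->
  s2 <= s1 -> `|s3| <= s2 ->
  0 < s2 + s3 ->
  A = U *m diag_mx (\row_i [:: s1; s2; s3]`_i) *m V^T ->
  0 < F ->
  exists (Sigma : 'M[R]_3) (c K delta : R),
    spd Sigma /\ 0 < c /\ 0 < delta /\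
    forall Rm : 'M[R]_3, is_rot Rm ->
      let phi := vee (logm ((U *m V^T)^T *m Rm)) in
      0 < vnorm phi < delta ->
      `| rl_kernel A (diag_mx (\row_i [:: s1; s2; s3]`_i)) Rm / F
           * haar_exp_density phi
         - c * laplace_kernel Sigma phi |
      <= K * vnorm phi ^+ 2 * (c * laplace_kernel Sigma phi).
Proof.
move=> rotU rotV s21 s32 s23_gt0 -> F_gt0; have [VTV _] := rotV.
have [s13_gt0 s12_gt0] : 0 < s1 + s3 /\ 0 < s1 + s2.
  by move/ler_normlP: s32 => [? ?]; split; lra.
exists (rl_cov s1 s2 s3 V), (8 * pi ^+ 2 * F * Num.sqrt 2)^-1, 1, (1 + (s1 + s2))^-1.
split; [exact: spd_rl_cov | split; [|split]].
- by rewrite invr_gt0 !mulr_gt0 ?exprn_gt0 ?pi_gt0 ?sqrtr_gt0.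
- by rewrite invr_gt0; lra.
move=> Rm rotRm phi /andP[th_gt0 th_lt].
have rotM := is_rotM (is_rotT (is_rotM rotU (is_rotT rotV))) rotRm.
have [cosE sin_gt0 phiE] := rot_angle rotM th_gt0; rewrite -/phi in cosE sin_gt0 phiE.
have deficit := conj_rot_deficit rotM VTV.
have [/andP[T_gt0 T_le1] PT] := rl_exponents s21 s32 s23_gt0 th_gt0 th_lt sin_gt0 cosE
  (dotmx3 _) (conj_rot_norm rotM VTV) (deficit 0) (deficit 1) (deficit 2%:R).
rewrite /rl_kernel /haar_exp_density /laplace_kernel mxtrace_rl_exponent // mul1r.
rewrite [in qform _ phi]phiE qform_invmx_rl_cov //.
have th_lt1 : vnorm phi < 1 by apply: (lt_le_trans th_lt); rewrite invf_le1; lra.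
by apply: rl_haar_laplace_ratio; rewrite ?th_gt0 ?th_lt1 ?T_gt0 ?T_le1.
Qed.
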